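(* Let $q$ be a prime power. Let $2\leq s\leq k$ be integers. Then \[ n_q(k,s)\leq \frac{q^3-q+1}{q^4}\genfrac{[}{]}{0pt}{}{k}{s}_q. \]
   Context: For a $(k - s)$-dimensional affine subspace $H$ of $\mathbb{F}_q^k$ not passing through the origin, $n_q(k,s)$ denotes the number of $s$-dimensional affine subspaces through the origin that are disjoint from $H$ (this is independent of the choice of $H$). For integers $0 \leq s \leq k$, the $q$-binomial (Gaussian) coefficient is $\genfrac{[}{]}{0pt}{}{k}{s}_q = \frac{(q^k - 1) \cdots (q^{k - s+ 1} - 1)}{(q^s - 1) \cdots (q - 1)}$ (empty product equal to $1$), and it is defined to be $0$ for other values of $s,k$. *)

From HB Require Import structures.
From mathcomp Require Import all_boot all_order all_algebra.
Set Implicit Arguments. Unset Strict Implicit. Unset Printing Implicit Defensive.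
Import Order.TTheory GRing.Theory Num.Theory.
Local Open Scope ring_scope.

Definition qbinom (q k s : nat) : rat :=
  if (s <= k)%N then
    \prod_(i < s) (((q ^ (k - i))%:R - 1) / ((q ^ i.+1)%:R - 1))
  else 0.

(* The affine subspace v + <U> (U : row space of the matrix U). A linear
   subspace W (row space of W) is disjoint from it iff no x in W has
   x - v in U. *)
Definition disjoint_affine (F : finFieldType) (k : nat)
  (v : 'rV[F]_k) (U W : 'M[F]_k) : bool :=
  [forall x : 'rV[F]_k, (x <= W)%MS ==> ~~ ((x - v) <= U)%MS] .

(* n_q(k,s) relative to H = v + rowspace U: number of s-dimensional linear
   subspaces of F^k (represented canonically by <<A>>%MS) disjoint from H. *)
Definition nq (F : finFieldType) (k s : nat) (v : 'rV[F]_k) (U : 'M[F]_k) : nat :=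
  #|[set <<A>>%MS | A in [pred A : 'M[F]_k |
       (\rank A == s) && disjoint_affine v U A]]|.

From HB Require Import structures.
From mathcomp Require Import all_boot all_order all_algebra.
From mathcomp Require Import ring lra zify.
Set Implicit Arguments. Unset Strict Implicit. Unset Printing Implicit Defensive.
Import Order.TTheory GRing.Theory Num.Theory.
Local Open Scope ring_scope.

(* Every s-dimensional subspace has prod_(i < s) (q^s - q^i) ordered bases,
   so n_q(k,s) times this number is at most the number of sequences of s
   independent vectors whose span X misses H = v + U, i.e. with v outside
   X + U.  Choose these vectors one at a time, keeping track of the
   codimension m of S + U, S being the span chosen so far.  A new vector
   outside S either lies in S + U (m is unchanged), or in S + U + v but not
   in S + U (then v lies in S + b + U and the sequence is lost), or outside
   S + U + v (m drops by one).  Counting the three kinds of choices bounds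
   the surviving proportion by a recursion in w = 1/q alone.  Truncating
   that recursion to 1 away from the diagonal leaves a recursion along the
   diagonal whose values are at most w - w^3 + w^4 = (q^3 - q + 1)/q^4 from
   s = 2 on, and prod_(i < s) (q^k - q^i) = prod_(i < s) (q^s - q^i) [k s]_q. *)

Section Survival.
Variables (R : realFieldType) (w : R).
Hypotheses (w_ge0 : 0 <= w) (w_le1 : w <= 1).

(* [survival r m] bounds the proportion of the r-step extensions of a span S
   with codim (S + U) = m whose final span X keeps v outside X + U; it is
   only used for r <= m. *)
Fixpoint survival (r m : nat) : R :=
  match r, m with
  | 0, _ => 1
  | _.+1, 0 => 0
  | r'.+1, m'.+1 =>
      if (r'.+2 <= m')%N then 1
      else (1 - w ^+ m') * survival r' m' + w ^+ m'.+1 * survival r' m'.+1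
  end.

Lemma survival_far r m : (r.+2 <= m)%N -> survival r m = 1.
Proof. by case: r m => [|r] [|m] //= hrm; rewrite ifT. Qed.

Let expr_ge0 n : 0 <= w ^+ n. Proof. exact: exprn_ge0. Qed.
Let expr_le1 n : w ^+ n <= 1. Proof. exact: exprn_ile1. Qed.
Let exprS_le n : w ^+ n.+1 <= w ^+ n.
Proof. by rewrite exprS ler_piMl. Qed.

Let mix_le1 m a b : 0 <= a <= 1 -> 0 <= b <= 1 -> (1 - w ^+ m) * a + w ^+ m.+1 * b <= 1.
Proof.
move=> /andP [a0 a1] /andP [b0 b1].
have := exprS_le m; have := expr_ge0 m.+1; have := expr_le1 m; nra.
Qed.

Lemma survival_ge0 r m : 0 <= survival r m.
Proof.
elim: r m => [|r IH] [|m] //=; case: ifP => // _.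
by rewrite addr_ge0 // mulr_ge0 // subr_ge0.
Qed.

Lemma survival_le1 r m : survival r m <= 1.
Proof.
elim: r m => [|r IH] [|m] //=; case: ifP => // _.
by apply: mix_le1; rewrite survival_ge0 IH.
Qed.

Lemma survival_rec r m :
  (1 - w ^+ m) * survival r m + w ^+ m.+1 * survival r m.+1 <= survival r.+1 m.+1.
Proof.
rewrite /=; case: ifP => // _.
by apply: mix_le1; rewrite survival_ge0 survival_le1.
Qed.

Lemma survival_leSm r m : (r <= m)%N -> survival r m <= survival r m.+1.
Proof.
elim: r m => [|r IH] m // hrm.
have [far|] := leqP r.+3 m.+1; first by rewrite (survival_far far) survival_le1.
rewrite ltnS => near; have {hrm near} -> : m = r.+1 by lia.
rewrite /= !ltnn ltnNge leqnSn /=.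
set a := survival r r; set b := survival r r.+1; set c := survival r r.+2.
have ab : a <= b by apply: IH.
have bc : b <= c by apply: IH; apply: leqnSn.
have b0 : 0 <= b := survival_ge0 r r.+1.
have u0 := expr_ge0 r; have u1 := expr_le1 r.
rewrite !exprSr; set u := w ^+ r in u0 u1 *.
have h1 : (1 - u) * a <= (1 - u) * b by rewrite ler_wpM2l // subr_ge0.
have h2 : u * w * w * b <= u * w * w * c by rewrite ler_wpM2l // !mulr_ge0.
have h3 : 0 <= b * u * ((1 - w) * (1 - w)) by rewrite !mulr_ge0 // subr_ge0.
nra.
Qed.

Lemma survival_subdiag_le r : (2 <= r)%N -> survival r r.+1 <= 1 - w ^+ 2 + w ^+ 3.
Proof.
elim: r => [|r IH] //; rewrite ltnS leq_eqVlt => /orP [/eqP <-|r2].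
  rewrite /= !mulr1 -subr_ge0.
  have -> : 1 - w ^+ 2 + w ^+ 3 - ((1 - w ^+ 2) * (1 - w ^+ 1 + w ^+ 2) + w ^+ 3)
          = (1 - w ^+ 2) * (w * (1 - w)) by ring.
  by rewrite mulr_ge0 ?subr_ge0 ?expr_le1 // mulr_ge0 // subr_ge0.
have w_le : w <= 1 - w ^+ 2 + w ^+ 3.
  rewrite -subr_ge0; have -> : 1 - w ^+ 2 + w ^+ 3 - w = (1 - w) * (1 - w ^+ 2) by ring.
  by rewrite mulr_ge0 ?subr_ge0 ?expr_le1.
have {}IH := IH r2.
rewrite /= ltnn (survival_far (leqnn _)) mulr1 [w ^+ r.+2]exprSr.
set A := 1 - _ + _ in IH w_le *; set u := w ^+ r.+1.
have h1 : (1 - u) * survival r r.+1 <= (1 - u) * A by rewrite ler_wpM2l // subr_ge0 expr_le1.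
have h2 : u * w <= u * A by rewrite ler_wpM2l ?expr_ge0.
have h3 : (1 - u) * A + u * A = A by ring.
lra.
Qed.

Lemma survival_diag_le r : (2 <= r)%N -> survival r r <= w - w ^+ 3 + w ^+ 4.
Proof.
elim: r => [|r IH] //; rewrite ltnS leq_eqVlt => /orP [/eqP <-|r2].
  by rewrite /= !mulr1 -subr_ge0 (_ : _ - _ = 0) //; ring.
rewrite /= ltnNge leqnSn /=.
have {}IH := IH r2; have hA := survival_subdiag_le r2.
have -> : w ^+ r.+1 * survival r r.+1 = w ^+ r * (w * survival r r.+1) by rewrite exprSr mulrA.
set c := w - _ + _ in IH *; set u := w ^+ r.
have h1 : (1 - u) * survival r r <= (1 - u) * c by rewrite ler_wpM2l // subr_ge0 expr_le1.
have h2 : u * (w * survival r r.+1) <= u * c.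
  have -> : c = w * (1 - w ^+ 2 + w ^+ 3) by rewrite /c; ring.
  by rewrite ler_wpM2l ?expr_ge0 // ler_wpM2l.
have h3 : (1 - u) * c + u * c = c by ring.
lra.
Qed.
End Survival.

Lemma survival_step (R : realFieldType) (q r m j d : nat) :
  (1 < q)%N -> (j <= d)%N -> (r <= m)%N ->
  survival (q%:R : R)^-1 r m.+1 *+ (q ^ d - q ^ j)
    + survival (q%:R : R)^-1 r m *+ (q ^ (d + m.+1) - q ^ d.+1)
  <= survival (q%:R : R)^-1 r.+1 m.+1 *+ (q ^ (d + m.+1) - q ^ j).
Proof.
move=> q_gt1 jd rm; have q_pos : (0 < q)%N by apply: ltnW.
have q_gt0 : (0 : R) < q%:R by rewrite ltr0n.
have w_ge0 : 0 <= (q%:R : R)^-1 by rewrite invr_ge0 ltW.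
have w_le1 : (q%:R : R)^-1 <= 1 by rewrite invf_le1 // ler1n.
set X := survival _ r m.+1; set Y := survival _ r m; set G := survival _ r.+1 m.+1.
have YX : Y <= X by apply: survival_leSm.
have Y_ge0 : 0 <= Y by apply: survival_ge0.
have X_ge0 : 0 <= X by apply: le_trans YX.
have le_jd : (q ^ j <= q ^ d)%N by rewrite leq_pexp2l.
have le_dk : (q ^ d.+1 <= q ^ (d + m.+1))%N by rewrite leq_pexp2l // addnS ltnS leq_addr.
have le_jk : (q ^ j <= q ^ (d + m.+1))%N by rewrite (leq_trans le_jd) // leq_pexp2l // leq_addr.
rewrite -(mulr_natr X) -(mulr_natr Y) -(mulr_natr G) !natrB // !natrX.
set x := (q%:R : R) in q_gt0 w_ge0 w_le1 *.
apply: le_trans (ler_wpM2r _ (survival_rec w_ge0 w_le1 r m)); last first.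
  by rewrite subr_ge0 ler_eXn2l // ?ltr1n // (leq_trans jd) // leq_addr.
have -> : ((1 - x^-1 ^+ m) * Y + x^-1 ^+ m.+1 * X) * (x ^+ (d + m.+1) - x ^+ j)
  = X * (x ^+ d - x ^+ j) + Y * (x ^+ (d + m.+1) - x ^+ d.+1)
    + x ^+ j * ((X - Y) * (1 - x^-1 ^+ m) + X * (x^-1 ^+ m - x^-1 ^+ m.+1)).
  by rewrite !exprVn exprD !exprS; field; rewrite expf_neq0 ?gt_eqF.
rewrite lerDl mulr_ge0 ?exprn_ge0 ?(ltW q_gt0) // addr_ge0 // mulr_ge0 // subr_ge0 //.
  exact: exprn_ile1.
by rewrite exprS ler_piMl ?exprn_ge0.
Qed.

Lemma qbinom_ge0 q k s : (0 < q)%N -> 0 <= qbinom q k s.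
Proof.
move=> q_gt0; rewrite /qbinom; case: ifP => // _; apply: prodr_ge0 => i _.
by rewrite divr_ge0 // subr_ge0 ler1n expn_gt0 q_gt0.
Qed.

Lemma qbinomE (q k s : nat) : (1 < q)%N -> (s <= k)%N ->
  ((\prod_(i < s) (q ^ k - q ^ i))%N%:R : rat) =
  ((\prod_(i < s) (q ^ s - q ^ i))%N%:R) * qbinom q k s.
Proof.
move=> q_gt1 sk; rewrite /qbinom sk !natr_prod.
have q0 : (0 < q)%N by apply: ltnW.
have powB n i : (i <= n)%N ->
    ((q ^ n - q ^ i)%N%:R : rat) = (q ^ i)%N%:R * ((q ^ (n - i))%N%:R - 1).
  move=> le_in; rewrite -{1}(subnKC le_in) expnD natrB ?leq_pmulr ?expn_gt0 ?q0 //.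
  by rewrite natrM mulrBr mulr1.
under eq_bigr => i _ do rewrite (powB k i (leq_trans (ltnW (ltn_ord i)) sk)).
under [X in _ = X * _]eq_bigr => i _ do rewrite (powB s i (ltnW (ltn_ord i))).
rewrite !big_split /= -mulrA; congr (_ * _).
rewrite [X in _ = X * _](reindex_inj rev_ord_inj) /=.
under [X in _ = X * _]eq_bigr => i _ do rewrite subKn //.
rewrite prodfV mulrCA mulfV ?mulr1 //.
rewrite prodf_seq_neq0; apply/allP => i _ /=.
by rewrite subr_eq0 pnatr_eq1 -(expn0 q) eqn_exp2l.
Qed.

Section RowSpaces.
Variables (F : fieldType) (n : nat).

Lemma mxrank_adds_row m (S : 'M[F]_(m, n)) (b : 'rV[F]_n) :
  ~~ (b <= S)%MS -> \rank (S + b)%MS = (\rank S).+1.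
Proof.
move=> bS; apply/eqP; rewrite eqn_leq; apply/andP; split.
  rewrite -[(\rank S).+1]addn1 (leq_trans (mxrank_adds_leqif S b)) //.
  by rewrite leq_add2l rank_leq_row.
rewrite ltn_neqAle (mxrank_leqif_sup (addsmxSl S b)).2 mxrankS ?addsmxSl // andbT.
by apply: contra bS; apply: submx_trans (addsmxSr S b).
Qed.

Lemma addsmx_row_exchange m (M : 'M[F]_(m, n)) (v b : 'rV[F]_n) :
  (b <= M + v)%MS -> ~~ (b <= M)%MS -> (v <= M + b)%MS.
Proof.
move=> bMv bM; have sub : (M + b <= M + v)%MS by rewrite addsmx_sub addsmxSl.
have vM : ~~ (v <= M)%MS.
  by apply: contra bM => vM; apply: submx_trans bMv _; rewrite addsmx_sub submx_refl.
have /eqmxP eq_span : (M + b == M + v)%MS.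
  by rewrite -(mxrank_leqif_eq sub) !mxrank_adds_row.
by rewrite eq_span addsmxSr.
Qed.

Lemma mxrank_addsmx_row (S U : 'M[F]_n) (b : 'rV[F]_n) :
  \rank (S + b + U)%MS = (\rank (S + U) + ~~ (b <= S + U)%MS)%N.
Proof.
rewrite -addsmxA (addsmxC b) addsmxA.
by case: (boolP (b <= S + U)%MS) => [/addsmx_idPl -> | /mxrank_adds_row ->]; rewrite ?addn0 ?addn1.
Qed.
End RowSpaces.

Section Counting.
Variables (F : finFieldType) (k : nat).
Local Notation q := #|F|.
Local Notation V := 'rV[F]_k.

Lemma inv_card_ge0 : 0 <= (q%:R : rat)^-1.
Proof. by rewrite invr_ge0 ler0n. Qed.

Lemma inv_card_le1 : (q%:R : rat)^-1 <= 1.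
Proof. by rewrite invf_le1 ?ler1n ?ltr0n // ltnW // card_finNzRing_gt1. Qed.

Lemma card_submx m (A : 'M[F]_(m, k)) : #|[set x : V | (x <= A)%MS]| = (q ^ \rank A)%N.
Proof.
have -> : [set x : V | (x <= A)%MS] = [set u *m row_base A | u in 'rV_(\rank A)].
  apply/setP => x; rewrite inE; apply/idP/imsetP.
    by rewrite -(eq_row_base A) => /submxP [u ->]; exists u.
  by case=> u _ ->; rewrite (submx_trans (submxMl u _)) ?eq_row_base.
by rewrite card_imset ?card_mx ?mul1n //; apply/row_free_inj/row_base_free.
Qed.

Lemma card_submx_diff m1 m2 (W : 'M[F]_(m1, k)) (S : 'M[F]_(m2, k)) : (S <= W)%MS ->
  #|[set x : V | (x <= W)%MS && ~~ (x <= S)%MS]| = (q ^ \rank W - q ^ \rank S)%N.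
Proof.
move=> SW; rewrite -!card_submx -cardsDS.
  by apply: eq_card => x; rewrite !inE andbC.
by apply/subsetP => x; rewrite !inE => /submx_trans; apply.
Qed.

Lemma card_notsubmx m (M : 'M[F]_(m, k)) :
  #|[set x : V | ~~ (x <= M)%MS]| = (q ^ k - q ^ \rank M)%N.
Proof.
have := card_submx_diff (submx1 M); rewrite mxrank1 => <-.
by apply: eq_card => x; rewrite !inE submx1.
Qed.

Fixpoint ext_count (P : pred 'M[F]_k) (r : nat) (S : 'M[F]_k) : nat :=
  if r is r'.+1 then \sum_(b : V | ~~ (b <= S)%MS) ext_count P r' (S + b)%MS
  else P S.

Lemma card_mul_le_ext_count (P : pred 'M[F]_k) r S (SS : {set 'M[F]_k}) :
  (forall W, W \in SS -> [/\ <<W>>%MS = W, (S <= W)%MS & \rank W = \rank S + r]%N) ->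
  (forall X, <<X>>%MS \in SS -> P X) ->
  (#|SS| * \prod_(i < r) (q ^ (\rank S + r) - q ^ (\rank S + i)) <= ext_count P r S)%N.
Proof.
elim: r S SS => [|r IH] S SS SS_sub SS_P /=.
  have SS1 : SS \subset [set <<S>>%MS].
    apply/subsetP => W WS; have [gW SW rW] := SS_sub W WS.
    rewrite inE -gW; apply/eqP/eq_genmx/eqmx_sym/eqmxP.
    by rewrite -(mxrank_leqif_eq SW) rW addn0.
  rewrite big_ord0 muln1; have [PS|PS] := boolP (P S).
    by rewrite (leq_trans (subset_leq_card SS1)) ?cards1.
  rewrite leqn0 cards_eq0; apply: contraNT PS => /set0Pn [W WS]; apply: SS_P.
  by have := subsetP SS1 W WS; rewrite inE => /eqP <-.
set j := \rank S; set Pr := (\prod_(i < r) (q ^ (j.+1 + r) - q ^ (j.+1 + i)))%N.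
have -> : (\prod_(i < r.+1) (q ^ (j + r.+1) - q ^ (j + i)))%N
    = ((q ^ (j + r.+1) - q ^ j) * Pr)%N.
  by rewrite big_ord_recl addn0 -addSnnS; congr (_ * _)%N; apply: eq_bigr => i _; rewrite -addSnnS.
pose SSb (b : V) := [set W in SS | (b <= W)%MS].
have double_count : (#|SS| * (q ^ (j + r.+1) - q ^ j) =
    \sum_(b : V | ~~ (b <= S)%MS) #|SSb b|)%N.
  transitivity (\sum_(W in SS) \sum_(b : V | (b <= W)%MS && ~~ (b <= S)%MS) 1)%N.
    rewrite -sum_nat_const; apply: eq_bigr => W WS; have [_ SW rW] := SS_sub W WS.
    by rewrite sum1dep_card card_submx_diff // rW.
  rewrite (exchange_big_dep (fun b : V => ~~ (b <= S)%MS)) /=; last by move=> W b _ /andP [].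
  apply: eq_bigr => b bS; rewrite sum1dep_card; apply: eq_card => W.
  by rewrite !inE bS andbT.
rewrite mulnA double_count big_distrl /=; apply: leq_sum => b bS.
rewrite /Pr /j -(mxrank_adds_row bS); apply: IH => [W|X]; rewrite ?inE.
  case/andP => WS bW; have [-> SW ->] := SS_sub W WS.
  by rewrite addsmx_sub SW bW mxrank_adds_row // addSnnS.
by case/andP=> /SS_P.
Qed.

Variables (v : V) (U : 'M[F]_k).

Lemma disjoint_affineE X : disjoint_affine v U X = ~~ (v <= X + U)%MS.
Proof.
apply/forallP/negP => [disj /sub_addsmxP [u def_v] | vXU x].
  have := disj (u.1 *m X); rewrite submxMl def_v /=.
  by rewrite opprD addrA subrr add0r eqmx_opp submxMl.
apply/implyP => xX; apply/negP => xvU; apply: vXU.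
by rewrite -[v](subKr x) addmx_sub_adds ?eqmx_opp.
Qed.

Lemma ext_count_disjoint_eq0 r S :
  (v <= S + U)%MS -> ext_count (disjoint_affine v U) r S = 0%N.
Proof.
elim: r S => [|r IH] S vSU /=; first by rewrite disjoint_affineE vSU.
rewrite big1 // => b _; apply: IH; apply: submx_trans vSU _.
by rewrite addsmxS ?addsmxSl.
Qed.

Lemma ext_count_disjointS r S : ~~ (v <= S + U)%MS ->
  ext_count (disjoint_affine v U) r.+1 S =
    (\sum_(b : V | (b <= S + U)%MS && ~~ (b <= S)%MS) ext_count (disjoint_affine v U) r (S + b)%MS
     + \sum_(b : V | ~~ (b <= S + U + v)%MS) ext_count (disjoint_affine v U) r (S + b)%MS)%N.
Proof.
move=> vSU; rewrite /= (bigID (fun b : V => (b <= S + U)%MS)) /=; congr (_ + _)%N.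
  by apply: eq_bigl => b; rewrite andbC.
rewrite (bigID (fun b : V => (b <= S + U + v)%MS)) /= big1 ?add0n => [|b].
  apply: eq_bigl => b; case: (boolP (b <= S + U + v)%MS) => [|bSUv]; rewrite ?andbF ?andbT //.
  have bSU : ~~ (b <= S + U)%MS by apply: contra bSUv => /submx_trans; apply; exact: addsmxSl.
  by rewrite bSU andbT; apply: contra bSU => /submx_trans; apply; exact: addsmxSl.
case/andP=> /andP [_ bSU] bSUv; apply: ext_count_disjoint_eq0.
by rewrite -addsmxA (addsmxC b) addsmxA addsmx_row_exchange.
Qed.

Lemma ext_count_disjoint_le r S : (r <= k - \rank (S + U))%N ->
  (ext_count (disjoint_affine v U) r S)%:R <=
    survival (q%:R)^-1 r (k - \rank (S + U))
      * (\prod_(i < r) (q ^ k - q ^ (\rank S + i)))%:R :> rat.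
Proof.
elim: r S => [|r IH] S; first by rewrite /= big_ord0 mulr1; case: disjoint_affine.
have [vSU _|vSU] := boolP (v <= S + U)%MS.
  by rewrite ext_count_disjoint_eq0 // mulr_ge0 // survival_ge0 ?inv_card_ge0 ?inv_card_le1.
set M := (S + U)%MS; set d := \rank M; set j := \rank S.
have SM : (S <= M)%MS by apply: addsmxSl.
have d_lt_k : (d < k)%N.
  rewrite ltn_neqAle rank_leq_col andbT; apply: contra vSU => /eqP dk.
  by apply: submx_full; rewrite /row_full -/d dk.
case Em: (k - d)%N => [|m] // rm.
set Pr := (\prod_(i < r) (q ^ k - q ^ (j.+1 + i)))%N.
have same (b : V) : (b <= M)%MS && ~~ (b <= S)%MS ->
    (ext_count (disjoint_affine v U) r (S + b)%MS)%:R <= survival (q%:R)^-1 r m.+1 * Pr%:R :> rat.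
  case/andP => bM bS; have := IH (S + b)%MS.
  by rewrite (mxrank_adds_row bS) mxrank_addsmx_row -/M bM addn0 -/d Em => /(_ (ltnW rm)).
have drop (b : V) : ~~ (b <= M + v)%MS ->
    (ext_count (disjoint_affine v U) r (S + b)%MS)%:R <= survival (q%:R)^-1 r m * Pr%:R :> rat.
  move=> bMv; have bM : ~~ (b <= M)%MS by apply: contra bMv => /submx_trans; apply; exact: addsmxSl.
  have bS : ~~ (b <= S)%MS by apply: contra bM => /submx_trans; apply; exact: SM.
  have := IH (S + b)%MS; rewrite (mxrank_adds_row bS) mxrank_addsmx_row -/M bM addn1.
  by rewrite -/d subnS Em => /(_ (ltnSE rm)).
rewrite ext_count_disjointS // natrD !natr_sum.
apply: le_trans (lerD (ler_sum _ same) (ler_sum _ drop)) _.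
have card_same : #|[pred b : V | (b <= M)%MS && ~~ (b <= S)%MS]| = (q ^ d - q ^ j)%N.
  by rewrite -card_submx_diff //; apply: eq_card => b; rewrite inE.
have card_drop : #|[pred b : V | ~~ (b <= M + v)%MS]| = (q ^ k - q ^ d.+1)%N.
  by rewrite -(mxrank_adds_row vSU) -card_notsubmx; apply: eq_card => b; rewrite inE.
rewrite !sumr_const card_same card_drop big_ord_recl addn0.
have -> : (\prod_(i < r) (q ^ k - q ^ (j + lift ord0 i)))%N = Pr.
  by apply: eq_bigr => i _; rewrite /= /bump /= add1n addnS.
have q_gt1 : (1 < q)%N by apply: card_finNzRing_gt1.
have qk : (q ^ k = q ^ (d + m.+1))%N by rewrite -Em subnKC // ltnW.
rewrite qk -!mulrnAl -mulrDl.
apply: le_trans (ler_wpM2r (ler0n _ Pr) (survival_step _ q_gt1 (mxrankS SM) (ltnSE rm))) _.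
by rewrite -(mulr_natr (survival _ r.+1 m.+1)) -mulrA natrM.
Qed.

Lemma nq_mul_le_ext_count s :
  (nq s v U * \prod_(i < s) (q ^ s - q ^ i) <= ext_count (disjoint_affine v U) s 0)%N.
Proof.
rewrite /nq; set SS := [set <<A>>%MS | A in _].
have := @card_mul_le_ext_count (disjoint_affine v U) s 0 SS; rewrite mxrank0; apply.
  by move=> W /imsetP [A /andP [/eqP rA _] ->]; rewrite genmx_id sub0mx mxrank_gen rA.
move=> X /imsetP [A /andP [_]]; rewrite !disjoint_affineE => vAU /genmxP/eqmxP XA.
by rewrite (adds_eqmx XA (eqmx_refl U)).
Qed.

Lemma nq_le_survival s : (s <= k)%N -> \rank U = (k - s)%N ->
  (nq s v U)%:R <= survival (q%:R)^-1 s s * qbinom q k s :> rat.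
Proof.
move=> sk rU; have q_gt1 : (1 < q)%N by apply: card_finNzRing_gt1.
set g := (\prod_(i < s) (q ^ s - q ^ i))%N.
have g_gt0 : (0 : rat) < g%:R.
  by rewrite ltr0n prodn_gt0 // => i; rewrite subn_gt0 ltn_exp2l.
rewrite -(ler_pM2r g_gt0) -natrM mulrAC -mulrA -qbinomE //.
apply: le_trans (_ : _ <= (ext_count (disjoint_affine v U) s 0)%:R) _.
  by rewrite ler_nat nq_mul_le_ext_count.
have := @ext_count_disjoint_le s 0.
by rewrite adds0mx_id rU mxrank0 subKn //; apply.
Qed.
End Counting.

Theorem lemma3p1 (F : finFieldType) (k s : nat)
  (hs : (2 <= s)%N) (hsk : (s <= k)%N)
  (v : 'rV[F]_k) (U : 'M[F]_k)
  (hU : \rank U = (k - s)%N) (hv : ~~ (v <= U)%MS) :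
  ((@nq F k s v U)%:R : rat) <=
    ((#|F|%:R ^+ 3 - #|F|%:R + 1) / (#|F|%:R ^+ 4)) * qbinom #|F| k s.
Proof.
apply: le_trans (nq_le_survival v hsk hU) _.
have q_gt0 : (0 < #|F|)%N by apply: ltnW; apply: card_finNzRing_gt1.
have -> : (#|F|%:R ^+ 3 - #|F|%:R + 1) / #|F|%:R ^+ 4
    = #|F|%:R^-1 - #|F|%:R^-1 ^+ 3 + #|F|%:R^-1 ^+ 4 :> rat.
  by field; rewrite pnatr_eq0 -lt0n.
apply: ler_wpM2r; first exact: qbinom_ge0.
apply: survival_diag_le hs; [exact: inv_card_ge0 | exact: inv_card_le1].
Qed.
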